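(* Every consistent theory $T$ of $L([1],[\omega],\mathtt u,\mathtt U)$ can be extended to a complete theory, i.e. there is a theory $T^*\supseteq T$ that is consistent and such that for every formula $\phi$, $T^*\vdash\phi$ or $T^*\vdash\neg\phi$.
   Context: Fix $Var=\{p_n : n\in\omega\}$. The formulas of $L([1],[\omega],\mathtt u,\mathtt U)$ form the smallest set containing $Var$ and closed under $\neg\phi$, $[1]\phi$, $[\omega]\phi$, $(\phi\wedge\psi)$, $(\phi\,\mathtt u\,\psi)$, $(\phi\,\mathtt U\,\psi)$. Abbreviations: $\vee,\to,\leftrightarrow$ as usual; $\mathtt f\phi:=(\phi\to\phi)\,\mathtt u\,\phi$, $\mathtt g\phi:=\neg\mathtt f\neg\phi$; $[a]^0\phi:=\phi$, $[a]^{n+1}\phi:=[a][a]^n\phi$ for $a\in\{1,\omega\}$. A theory is a nonempty set of formulas. Proof system. Axioms: all instances of A1 substitution instances of classical tautologies; A2 $[1][\omega]\phi\leftrightarrow[\omega]\phi$; A3 $\neg[a]\phi\leftrightarrow[a]\neg\phi$ ($a\in\{1,\omega\}$); A4 $[a](\phi*\psi)\leftrightarrow([a]\phi*[a]\psi)$ ($a\in\{1,\omega\}$, $*\in\{\wedge,\vee,\to,\leftrightarrow\}$); A5 $\psi\to\phi\,\mathtt u\,\psi$; A6 $\phi\,\mathtt u\,\psi\to\phi\,\mathtt U\,\psi$; A7 $\big(\bigwedge_{k=0}^n[1]^k(\phi\wedge\neg\psi)\wedge[1]^{n+1}\psi\big)\to\phi\,\mathtt u\,\psi$ ($n\in\omega$);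 A8 $\big(\bigwedge_{k=0}^n[\omega]^k\mathtt g(\phi\wedge\neg\psi)\wedge[\omega]^{n+1}(\phi\,\mathtt u\,\psi)\big)\to\phi\,\mathtt U\,\psi$ ($n\in\omega$). Rules: R1 from $\phi$ and $\phi\to\psi$ infer $\psi$; R2 from $\phi$ infer $[a]\phi$, $a\in\{1,\omega\}$; R3 from $\theta\to\neg\psi$ and all $\theta\to\big(\bigvee_{k=0}^n[1]^k(\neg\phi\vee\psi)\vee[1]^{n+1}\neg\psi\big)$, $n\in\omega$, infer $\theta\to\neg(\phi\,\mathtt u\,\psi)$; R4 from $\theta\to\neg(\phi\,\mathtt u\,\psi)$ and all $\theta\to\big(\bigvee_{k=0}^n[\omega]^k\neg\mathtt g(\phi\wedge\neg\psi)\vee[\omega]^{n+1}\neg(\phi\,\mathtt u\,\psi)\big)$, $n\in\omega$, infer $\theta\to\neg(\phi\,\mathtt U\,\psi)$. $\vdash\phi$ ($\phi$ is a theorem) iff there is a sequence $(\phi_\beta)_{\beta\le\alpha}$, $\alpha$ a countable ordinal, with $\phi_\alpha=\phi$ and each $\phi_\beta$ an axiom or obtained from earlier members by a rule. $T\vdash\phi$ iff there is such a sequence in which each member is an axiom, a member of $T$, or obtained from earlier members by a rule, where R2 may only be applied to theorems. A theory $T$ is consistent iff there is no formula $\chi$ with $T\vdash\chi$ and $T\vdash\neg\chi$. *)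

From Stdlib Require Import Bool.

Inductive modality : Type := M1 | MW.

Inductive form : Type :=
| Var   : nat -> form
| Neg   : form -> form
| Box   : modality -> form -> form
| And   : form -> form -> form
| Until : form -> form -> form
| UUntil : form -> form -> form.

Definition Or  (a b : form) : form := Neg (And (Neg a) (Neg b)).
Definition Imp (a b : form) : form := Neg (And a (Neg b)).
Definition Iff (a b : form) : form := And (Imp a b) (Imp b a).
Definition Ff (a : form) : form := Until (Imp a a) a.
Definition Gg (a : form) : form := Neg (Ff (Neg a)).

Fixpoint boxn (m : modality) (n : nat) (a : form) : form :=
  match n with 0 => a | S k => Box m (boxn m k a) end.

Fixpoint bigAnd (n : nat) (F : nat -> form) : form :=
  match n with 0 => F 0 | S k => And (bigAnd k F) (F (S k)) end.
Fixpoint bigOr (n : nat) (F : nat -> form) : form :=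
  match n with 0 => F 0 | S k => Or (bigOr k F) (F (S k)) end.

(* Substitution instances of classical tautologies: formulas true under every
   boolean assignment to their maximal non-boolean (non-Neg, non-And)
   subformulas. *)
Fixpoint beval (v : form -> bool) (a : form) : bool :=
  match a with
  | Neg b => negb (beval v b)
  | And b c => beval v b && beval v c
  | _ => v a
  end.
Definition taut_instance (a : form) : Prop := forall v, beval v a = true.

Inductive IsAxiom : form -> Prop :=
| A1 a : taut_instance a -> IsAxiom a
| A2 a : IsAxiom (Iff (Box M1 (Box MW a)) (Box MW a))
| A3 m a : IsAxiom (Iff (Neg (Box m a)) (Box m (Neg a)))
| A4_and m a b : IsAxiom (Iff (Box m (And a b)) (And (Box m a) (Box m b)))
| A4_or  m a b : IsAxiom (Iff (Box m (Or a b)) (Or (Box m a) (Box m b)))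
| A4_imp m a b : IsAxiom (Iff (Box m (Imp a b)) (Imp (Box m a) (Box m b)))
| A4_iff m a b : IsAxiom (Iff (Box m (Iff a b)) (Iff (Box m a) (Box m b)))
| A5 a b : IsAxiom (Imp b (Until a b))
| A6 a b : IsAxiom (Imp (Until a b) (UUntil a b))
| A7 a b n : IsAxiom (Imp (And (bigAnd n (fun k => boxn M1 k (And a (Neg b))))
                             (boxn M1 (S n) b))
                        (Until a b))
| A8 a b n : IsAxiom (Imp (And (bigAnd n (fun k => boxn MW k (Gg (And a (Neg b)))))
                             (boxn MW (S n) (Until a b)))
                        (UUntil a b)).

Definition R3prem (a b : form) (n : nat) : form :=
  Or (bigOr n (fun k => boxn M1 k (Or (Neg a) b))) (boxn M1 (S n) (Neg b)).
Definition R4prem (a b : form) (n : nat) : form :=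
  Or (bigOr n (fun k => boxn MW k (Neg (Gg (And a (Neg b))))))
     (boxn MW (S n) (Neg (Until a b))).

(* Theorems: least set containing the axioms and closed under R1-R4.
   (Equivalent to derivability by sequences of countable ordinal length.) *)
Inductive Thm : form -> Prop :=
| T_ax a : IsAxiom a -> Thm a
| T_mp a b : Thm a -> Thm (Imp a b) -> Thm b
| T_nec m a : Thm a -> Thm (Box m a)
| T_R3 th a b : Thm (Imp th (Neg b)) -> (forall n, Thm (Imp th (R3prem a b n))) ->
    Thm (Imp th (Neg (Until a b)))
| T_R4 th a b : Thm (Imp th (Neg (Until a b))) ->
    (forall n, Thm (Imp th (R4prem a b n))) ->
    Thm (Imp th (Neg (UUntil a b))).

Definition theory := form -> Prop.

(* T |- phi : R2 may only be applied to theorems. *)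
Inductive Prv (T : theory) : form -> Prop :=
| P_ax a : IsAxiom a -> Prv T a
| P_hyp a : T a -> Prv T a
| P_mp a b : Prv T a -> Prv T (Imp a b) -> Prv T b
| P_nec m a : Thm a -> Prv T (Box m a)
| P_R3 th a b : Prv T (Imp th (Neg b)) -> (forall n, Prv T (Imp th (R3prem a b n))) ->
    Prv T (Imp th (Neg (Until a b)))
| P_R4 th a b : Prv T (Imp th (Neg (Until a b))) ->
    (forall n, Prv T (Imp th (R4prem a b n))) ->
    Prv T (Imp th (Neg (UUntil a b))).

Definition is_theory (T : theory) : Prop := exists a, T a.
Definition consistent (T : theory) : Prop := ~ exists c, Prv T c /\ Prv T (Neg c).

(* Because of the infinitary rules R3 and R4 the usual "union of a chain of
   consistent theories is consistent" argument fails: a derivation from the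
   union may use infinitely many premises.  Formulas are enumerated as
   phi_0, phi_1, ...; stage i+1 adds phi_i when this keeps the stage
   consistent, and otherwise adds not-phi_i together with a *witness*: when
   phi_i is the conclusion of an instance of R3/R4, the negation of one of
   its premises that is consistent with the stage.  The limit T* of the
   stages decides every formula, and it is closed under derivability: an
   application of R3/R4 whose premises all lie in T* cannot have a rejected
   conclusion, because the witness would put both a premise and its
   negation into T*. *)

From Stdlib Require Import Classical ClassicalEpsilon Lia Cantor.

Ltac taut := let v := fresh "v" in intro v; unfold Imp, Or, Iff in *; simpl;
  repeat match goal with
  | |- context [beval v ?x] => destruct (beval v x)
  | |- context [v ?x] => destruct (v x)
  end; reflexivity.

Lemma Prv_taut1 T a b : Prv T a -> taut_instance (Imp a b) -> Prv T b.
Proof. intros Ha H. eapply P_mp; [exact Ha | apply P_ax, A1, H]. Qed.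

Lemma Prv_taut2 T a b c :
  Prv T a -> Prv T b -> taut_instance (Imp a (Imp b c)) -> Prv T c.
Proof.
  intros Ha Hb H. eapply P_mp; [exact Hb |].
  eapply P_mp; [exact Ha | apply P_ax, A1, H].
Qed.

Lemma Prv_mono (T T' : theory) f :
  (forall g, T g -> T' g) -> Prv T f -> Prv T' f.
Proof.
  intros HT H; induction H.
  - now apply P_ax.
  - now apply P_hyp, HT.
  - exact (P_mp _ _ _ IHPrv1 IHPrv2).
  - now apply P_nec.
  - now apply P_R3.
  - now apply P_R4.
Qed.

Definition add (T : theory) (p : form) : theory := fun f => T f \/ f = p.

(* It holds despite R3/R4 because these rules carry
   an arbitrary antecedent [th], into which the new hypothesis is absorbed;
   necessitation is harmless since R2 only applies to theorems. *)
Lemma deduction T p f : Prv (add T p) f -> Prv T (Imp p f).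
Proof.
  intro H; induction H.
  - eapply Prv_taut1; [apply P_ax; eassumption | taut].
  - destruct H as [H | ->].
    + eapply Prv_taut1; [apply P_hyp; eassumption | taut].
    + apply P_ax, A1. taut.
  - eapply Prv_taut2; [exact IHPrv1 | exact IHPrv2 | taut].
  - apply (Prv_taut1 _ _ _ (P_nec _ m _ H)). taut.
  - eapply Prv_taut1 with (a := Imp (And p th) (Neg (Until a b))); [| taut].
    apply P_R3.
    + eapply Prv_taut1; [exact IHPrv | taut].
    + intro n. eapply Prv_taut1; [exact (H1 n) | taut].
  - eapply Prv_taut1 with (a := Imp (And p th) (Neg (UUntil a b))); [| taut].
    apply P_R4.
    + eapply Prv_taut1; [exact IHPrv | taut].
    + intro n. eapply Prv_taut1; [exact (H1 n) | taut].
Qed.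

Lemma cut T p f : Prv T p -> Prv (add T p) f -> Prv T f.
Proof. intros Hp H. exact (P_mp _ _ _ Hp (deduction _ _ _ H)). Qed.

Lemma refute_inconsistent T p : ~ consistent (add T p) -> Prv T (Neg p).
Proof.
  intro H. apply NNPP in H. destruct H as [c [H1 H2]].
  apply deduction in H1, H2. eapply Prv_taut2; [exact H1 | exact H2 | taut].
Qed.

Lemma prove_inconsistent_neg T p : ~ consistent (add T (Neg p)) -> Prv T p.
Proof.
  intro H. apply refute_inconsistent in H. eapply Prv_taut1; [exact H | taut].
Qed.

Lemma consistent_sub (T T' : theory) :
  (forall f, T' f -> T f) -> consistent T -> consistent T'.
Proof. intros H HT [c [H1 H2]]. apply HT. exists c. split; eapply Prv_mono; eauto. Qed.

Lemma consistent_add T p : consistent T -> Prv T p -> consistent (add T p).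
Proof. intros HT Hp [c [H1 H2]]. apply HT. exists c. split; eapply cut; eauto. Qed.

Inductive premise : form -> form -> Prop :=
| prem_R3_base th a b : premise (Imp th (Neg (Until a b))) (Imp th (Neg b))
| prem_R3_step th a b n : premise (Imp th (Neg (Until a b))) (Imp th (R3prem a b n))
| prem_R4_base th a b :
    premise (Imp th (Neg (UUntil a b))) (Imp th (Neg (Until a b)))
| prem_R4_step th a b n : premise (Imp th (Neg (UUntil a b))) (Imp th (R4prem a b n)).

Lemma infinitary_rule S c :
  (exists p, premise c p) -> (forall p, premise c p -> Prv S p) -> Prv S c.
Proof.
  intros [p0 Hp0] H. destruct Hp0.
  - apply P_R3; [apply H | intro n; apply H]; constructor.
  - apply P_R3; [apply H | intro k; apply H]; constructor.
  - apply P_R4; [apply H | intro n; apply H]; constructor.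
  - apply P_R4; [apply H | intro k; apply H]; constructor.
Qed.

Lemma refuted_premise S c :
  consistent S -> Prv S (Neg c) -> (exists p, premise c p) ->
  exists p, premise c p /\ consistent (add S (Neg p)).
Proof.
  intros HS Hc Hprem. apply NNPP. intro Hnone. apply HS. exists c. split; [| exact Hc].
  apply infinitary_rule; [exact Hprem |]. intros p Hp.
  apply prove_inconsistent_neg. intro Hcons. apply Hnone. eauto.
Qed.

Definition witness (S : theory) (phi w : form) : Prop :=
  consistent (add S w) /\
  ((exists p, premise phi p) -> exists p, premise phi p /\ w = Neg p).

Lemma witness_exists S phi :
  consistent S -> Prv S (Neg phi) -> exists w, witness S phi w.
Proof.
  intros HS Hphi.
  destruct (classic (exists p, premise phi p)) as [Hprem | Hnoprem].
  - destruct (refuted_premise S phi HS Hphi Hprem) as [p [Hp Hcons]].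
    exists (Neg p). split; [exact Hcons | eauto].
  - exists (Neg phi). split; [now apply consistent_add | intro; contradiction].
Qed.

Definition wit (T : theory) (phi : form) : form :=
  epsilon (inhabits (Neg phi)) (witness (add T (Neg phi)) phi).

Lemma wit_spec T phi :
  consistent T -> ~ consistent (add T phi) ->
  witness (add T (Neg phi)) phi (wit T phi).
Proof.
  intros HT Hphi. unfold wit. apply epsilon_spec, witness_exists.
  - apply consistent_add; [exact HT | now apply refute_inconsistent].
  - apply P_hyp. now right.
Qed.

Fixpoint code (f : form) : nat :=
  match f with
  | Var n => to_nat (0, n)
  | Neg a => to_nat (1, code a)
  | Box M1 a => to_nat (2, code a)
  | Box MW a => to_nat (3, code a)
  | And a b => to_nat (4, to_nat (code a, code b))
  | Until a b => to_nat (5, to_nat (code a, code b))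
  | UUntil a b => to_nat (6, to_nat (code a, code b))
  end.

Lemma to_nat_inj x y x' y' : to_nat (x, y) = to_nat (x', y') -> x = x' /\ y = y'.
Proof.
  intro E. apply (f_equal of_nat) in E. rewrite !cancel_of_to in E.
  now injection E.
Qed.

Lemma code_inj f g : code f = code g -> f = g.
Proof.
  revert g; induction f as [n | a IHa | [|] a IHa | a IHa b IHb | a IHa b IHb
                           | a IHa b IHb];
    intros [m | c | [|] c | c d | c d | c d]; cbn [code]; intro E;
    apply to_nat_inj in E as [Etag E]; try discriminate;
    try (apply to_nat_inj in E as [E1 E2]); f_equal; auto.
Qed.

Definition enum (n : nat) : form :=
  epsilon (inhabits (Var 0)) (fun f => code f = n).

Lemma enum_code f : enum (code f) = f.
Proof. apply code_inj. unfold enum. apply (epsilon_spec _ (fun g => code g = code f)). eauto. Qed.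

Definition step (T : theory) (phi : form) : theory :=
  if excluded_middle_informative (consistent (add T phi)) then add T phi
  else add (add T (Neg phi)) (wit T phi).

Lemma step_extends T phi f : T f -> step T phi f.
Proof. intro H. unfold step, add. destruct excluded_middle_informative; auto. Qed.

Lemma step_consistent T phi : consistent T -> consistent (step T phi).
Proof.
  intro HT. unfold step. destruct excluded_middle_informative as [C | C].
  - exact C.
  - exact (proj1 (wit_spec T phi HT C)).
Qed.

Fixpoint stage (T : theory) (i : nat) : theory :=
  match i with 0 => T | S i => step (stage T i) (enum i) end.

Lemma stage_consistent T i : consistent T -> consistent (stage T i).
Proof. intro H; induction i; simpl; auto using step_consistent. Qed.

Lemma stage_mono T i j f : i <= j -> stage T i f -> stage T j f.
Proof. intro H; induction H; simpl; auto using step_extends. Qed.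

Definition limit (T : theory) : theory := fun f => exists i, stage T i f.

Lemma limit_rejected T i :
  ~ consistent (add (stage T i) (enum i)) ->
  limit T (Neg (enum i)) /\ limit T (wit (stage T i) (enum i)).
Proof.
  intro C. split; exists (S i); simpl; unfold step, add;
    destruct excluded_middle_informative; tauto.
Qed.

Lemma limit_accepted T i :
  consistent (add (stage T i) (enum i)) -> limit T (enum i).
Proof.
  intro C. exists (S i). simpl. unfold step, add.
  destruct excluded_middle_informative; tauto.
Qed.

Lemma limit_decides T f : limit T f \/ limit T (Neg f).
Proof.
  rewrite <- (enum_code f).
  destruct (classic (consistent (add (stage T (code f)) (enum (code f))))) as [C | C].
  - left. now apply limit_accepted.
  - right. exact (proj1 (limit_rejected T _ C)).
Qed.

Section Limit.
Variable T : theory.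
Hypothesis HT : consistent T.

Lemma limit_not_both f : limit T f -> limit T (Neg f) -> False.
Proof.
  intros [i Hi] [j Hj]. apply (stage_consistent T (i + j) HT). exists f.
  split; apply P_hyp; [apply (stage_mono T i) | apply (stage_mono T j)];
    auto; lia.
Qed.

Lemma limit_of_stage i c : Prv (stage T i) c -> limit T c.
Proof.
  intro H. destruct (limit_decides T c) as [| [j Hj]]; auto. exfalso.
  apply (stage_consistent T (i + j) HT). exists c. split.
  - eapply Prv_mono; [| exact H]. intros; apply (stage_mono T i); auto; lia.
  - apply P_hyp. apply (stage_mono T j); auto; lia.
Qed.

(* T* is closed under R3/R4: the witness rules out rejecting a conclusion
   whose premises are all in T*. *)
Lemma limit_rule_closed c :
  (exists p, premise c p) -> (forall p, premise c p -> limit T p) -> limit T c.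
Proof.
  intros Hprem Hall. rewrite <- (enum_code c) in *.
  destruct (classic (consistent (add (stage T (code c)) (enum (code c))))) as [C | C].
  - now apply limit_accepted.
  - exfalso. destruct (limit_rejected T _ C) as [_ Hw].
    destruct (wit_spec _ _ (stage_consistent T _ HT) C) as [_ Hwit].
    destruct (Hwit Hprem) as [p [Hp Ew]]. rewrite Ew in Hw.
    exact (limit_not_both p (Hall p Hp) Hw).
Qed.

Lemma limit_closed c : Prv (limit T) c -> limit T c.
Proof.
  intro H; induction H.
  - apply (limit_of_stage 0). now apply P_ax.
  - assumption.
  - destruct IHPrv1 as [i Hi], IHPrv2 as [j Hj]. apply (limit_of_stage (i + j)).
    apply (P_mp _ a); apply P_hyp;
      [apply (stage_mono T i) | apply (stage_mono T j)]; auto; lia.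
  - apply (limit_of_stage 0). now apply P_nec.
  - apply limit_rule_closed; [eexists; constructor |].
    intros p Hp; inversion Hp; subst; auto.
  - apply limit_rule_closed; [eexists; constructor |].
    intros p Hp; inversion Hp; subst; auto.
Qed.

End Limit.

Theorem mainTheorem6 (T : theory) :
  is_theory T -> consistent T ->
  exists Ts : theory,
    (forall a, T a -> Ts a) /\ is_theory Ts /\ consistent Ts /\
    (forall a, Prv Ts a \/ Prv Ts (Neg a)).
Proof.
  intros [a0 Ha0] HT. exists (limit T). split; [| split; [| split]].
  - intros a Ha. now exists 0.
  - exists a0. now exists 0.
  - intros [c [H1 H2]]. apply (limit_not_both T HT c); now apply limit_closed.
  - intro a. destruct (limit_decides T a); [left | right]; now apply P_hyp.
Qed.
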